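(* Let $A$ be a braided Hopf algebra and let $B$ be a Hopf subalgebra of $U_0(A)$ which is braided with the restriction of the braiding $(x\mid y)=\langle a\mid S(b)\rangle$ (for $x=l^+_A(a)$, $y=l^-_A(b)$) on $U_0(A)$. Define $\phi:A\to B^\circ$ by $\phi(a)(u)=u(a)$ for $a\in A$, $u\in B$. Then $\phi$ is a Hopf algebra map, and if $a\in A$ satisfies $l_A^+(a)\in B$ (resp. $l_A^-(a)\in B$) then $\phi(a)=l_B^+(l_A^+(a))$ (resp. $\phi(a)=l_B^-(l_A^-(a))$). Consequently $\phi(A)\supseteq U(B)$.
   Context: Sweedler notation $\Delta(a)=\sum a_{(1)}\otimes a_{(2)}$. A braiding on a bialgebra $A$ over a field $k$ is a bilinear form $\langle\cdot\mid\cdot\rangle:A\times A\to k$ such that for all $a,b,c\in A$: (1) $\sum\langle a_{(1)}\mid b_{(1)}\rangle\, b_{(2)}a_{(2)}=\sum\langle a_{(2)}\mid b_{(2)}\rangle\, a_{(1)}b_{(1)}$; (2) it is invertible in the convolution algebra $(A\otimes A)^*$; (3) $\langle a\mid bc\rangle=\sum\langle a_{(1)}\mid b\rangle\langle a_{(2)}\mid c\rangle$; (4) $\langle ab\mid c\rangle=\sum\langle b\mid c_{(1)}\rangle\langle a\mid c_{(2)}\rangle$. A braided Hopf algebra is a Hopf algebra with a braiding. $A^\circ$ is the restricted dual Hopf algebra. For a braided Hopf algebra $A$ with antipode $S$, $l_A^{\pm}:A\to A^\circ$ are $l_A^+(a)(b)=\langle a\mid b\rangle$, $l_A^-(a)(b)=\langle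 b\mid S(a)\rangle$. $U^\pm=l_A^\pm(A)$, $U(A)$ is the Hopf subalgebra of $A^\circ$ generated by $U^+\cup U^-$, and $U_0(A)=U^+\cap U^-$. The form $(l^+_A(a)\mid l^-_A(b))=\langle a\mid S(b)\rangle$ is a well-defined braiding on $U_0(A)$. For the braided Hopf algebra $B$, $l_B^\pm$ and $U(B)\subseteq B^\circ$ are defined in the same way using this braiding. *)

(* Hopf algebras over a field k, encoded with explicit
   (Sweedler-style) finite coproduct lists; tensors are compared through
   multilinear forms (which separate tensors over a field). *)
From HB Require Import structures.
From mathcomp Require Import all_boot all_order all_algebra.
Set Implicit Arguments. Unset Strict Implicit. Unset Printing Implicit Defensive.
Import GRing.Theory.
Local Open Scope ring_scope.

Section HopfDefs.
Variable k : fieldType.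

Fixpoint allP (T : Type) (P : T -> Prop) (s : seq T) : Prop :=
  match s with nil => True | x :: s' => P x /\ allP P s' end.

Definition lin_fun (V : lmodType k) (f : V -> k) : Prop :=
  forall (c : k) (x y : V), f (c *: x + y) = c * f x + f y.

Definition bilin (U V : lmodType k) (f : U -> V -> k) : Prop :=
  (forall (c : k) x x' y, f (c *: x + x') y = c * f x y + f x' y) /\
  (forall (c : k) x y y', f x (c *: y + y') = c * f x y + f x y').

Definition trilin (U : lmodType k) (g : U -> U -> U -> k) : Prop :=
  (forall (c : k) x x' y z, g (c *: x + x') y z = c * g x y z + g x' y z) /\
  (forall (c : k) x y y' z, g x (c *: y + y') z = c * g x y z + g x y' z) /\
  (forall (c : k) x y z z', g x y (c *: z + z') = c * g x y z + g x y z').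

(* evaluation of a bilinear map on a tensor sum_i t_i.1 (x) t_i.2 *)
Definition tsum (U V : Type) (R : nmodType) (f : U -> V -> R) (t : seq (U * V)) : R :=
  \sum_(p <- t) f p.1 p.2.

(* Data of a Hopf algebra on an associative unital k-algebra A:
   coproduct (Delta a = sum of the listed pairs), counit, antipode. *)
Record hopf (A : algType k) := Hopf {
  cop : A -> seq (A * A);
  eps : A -> k;
  antip : A -> A }.

Definition is_hopf (A : algType k) (H : hopf A) : Prop :=
  let D := cop H in let e := eps H in let S := antip H in
  (forall f : A -> A -> k, bilin f -> forall (c : k) a a',
      tsum f (D (c *: a + a')) = c * tsum f (D a) + tsum f (D a')) /\
  (forall g : A -> A -> A -> k, trilin g -> forall a,
      \sum_(p <- D a) \sum_(q <- D p.1) g q.1 q.2 p.2 =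
      \sum_(p <- D a) \sum_(q <- D p.2) g p.1 q.1 q.2) /\
  (forall a, \sum_(p <- D a) e p.1 *: p.2 = a) /\
  (forall a, \sum_(p <- D a) e p.2 *: p.1 = a) /\
  lin_fun e /\ (forall a b, e (a * b) = e a * e b) /\ e 1 = 1 /\
  (forall f : A -> A -> k, bilin f -> forall a b,
      tsum f (D (a * b)) =
      \sum_(p <- D a) \sum_(q <- D b) f (p.1 * q.1) (p.2 * q.2)) /\
  (forall f : A -> A -> k, bilin f -> tsum f (D 1) = f 1 1) /\
  (forall (c : k) a b, S (c *: a + b) = c *: S a + S b) /\
  (forall a, \sum_(p <- D a) S p.1 * p.2 = (e a)%:A) /\
  (forall a, \sum_(p <- D a) p.1 * S p.2 = (e a)%:A).

Definition conv (A : algType k) (H : hopf A) (f g : A -> k) : A -> k :=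
  fun a => \sum_(p <- cop H a) f p.1 * g p.2.

(* the restricted dual H^circ: linear f with f o m in H^* (x) H^* *)
Definition resdual (A : algType k) (H : hopf A) (f : A -> k) : Prop :=
  lin_fun f /\
  exists t : seq ((A -> k) * (A -> k)),
    allP (fun p => lin_fun p.1 /\ lin_fun p.2) t /\
    forall a b, f (a * b) = \sum_(p <- t) p.1 a * p.2 b.

(* psi : C -> H^circ is a Hopf algebra map (H^circ (x) H^circ is viewed
   inside (H (x) H)^* ) *)
Definition hopf_map (C H : algType k) (HC : hopf C) (HH : hopf H)
  (psi : C -> H -> k) : Prop :=
  (forall x, resdual HH (psi x)) /\
  (forall (c : k) x y h, psi (c *: x + y) h = c * psi x h + psi y h) /\
  (forall x y, psi (x * y) =1 conv HH (psi x) (psi y)) /\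
  (psi 1 =1 eps HH) /\
  (forall x h h', psi x (h * h') =
      \sum_(p <- cop HC x) psi p.1 h * psi p.2 h') /\
  (forall x, psi x 1 = eps HC x) /\
  (forall x, psi (antip HC x) =1 (fun h => psi x (antip HH h))).

Definition braiding (A : algType k) (H : hopf A) (br : A -> A -> k) : Prop :=
  let D := cop H in let e := eps H in
  bilin br /\
  (forall a b, \sum_(p <- D a) \sum_(q <- D b) br p.1 q.1 *: (q.2 * p.2) =
               \sum_(p <- D a) \sum_(q <- D b) br p.2 q.2 *: (p.1 * q.1)) /\
  (exists br' : A -> A -> k, bilin br' /\ forall a b,
      \sum_(p <- D a) \sum_(q <- D b) br p.1 q.1 * br' p.2 q.2 = e a * e b /\
      \sum_(p <- D a) \sum_(q <- D b) br' p.1 q.1 * br p.2 q.2 = e a * e b) /\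
  (forall a b c, br a (b * c) = \sum_(p <- D a) br p.1 b * br p.2 c) /\
  (forall a b c, br (a * b) c = \sum_(p <- D c) br b p.1 * br a p.2).

Definition lplus (A : algType k) (br : A -> A -> k) (a : A) : A -> k :=
  fun b => br a b.
Definition lminus (A : algType k) (H : hopf A) (br : A -> A -> k) (a : A)
  : A -> k := fun b => br b (antip H a).

Definition in_Uplus (A : algType k) (br : A -> A -> k) (f : A -> k) : Prop :=
  exists a, f =1 lplus br a.
Definition in_Uminus (A : algType k) (H : hopf A) (br : A -> A -> k)
  (f : A -> k) : Prop := exists a, f =1 lminus H br a.
Definition in_U0 (A : algType k) (H : hopf A) (br : A -> A -> k)
  (f : A -> k) : Prop := in_Uplus br f /\ in_Uminus H br f.

Definition hopf_subalg_pred (A : algType k) (H : hopf A)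
  (P : (A -> k) -> Prop) : Prop :=
  (forall f, P f -> resdual H f) /\
  (forall f g, P f -> f =1 g -> P g) /\
  (forall (c : k) f g, P f -> P g -> P (fun a => c * f a + g a)) /\
  P (eps H) /\
  (forall f g, P f -> P g -> P (conv H f g)) /\
  (forall f, P f -> P (fun a => f (antip H a))) /\
  (forall f, P f -> exists t : seq ((A -> k) * (A -> k)),
      allP (fun p => P p.1 /\ P p.2) t /\
      forall a b, f (a * b) = \sum_(p <- t) p.1 a * p.2 b).

Definition in_U (A : algType k) (H : hopf A) (br : A -> A -> k)
  (F : A -> k) : Prop :=
  forall P, hopf_subalg_pred H P ->
    (forall a, P (lplus br a)) -> (forall a, P (lminus H br a)) -> P F.

End HopfDefs.

(* The transpose [phi] of the Hopf map [iota : B -> A^circ] is a Hopf map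
   [A -> B^circ] because the Hopf axioms of [iota] transpose into those of [phi].
   If [iota x = l^+(a)], then evaluating [phi a] at [y = l^-(b)] in [U_0(A)] gives
   [iota y a = <a | S b> = (x | y)] by definition of the restricted braiding.  If
   [iota x = l^-(a)], one evaluates at [y = l^+(b)] and writes [S x = l^-(c)]; comparing
   [iota (S x) b = <b | S c>] with [iota x (S b) = <S b | S a>] reduces the claim to the
   identity [<S b | S a> = <b | a>], valid for every braiding: it follows from the
   associativity of convolution in [(A (x) A)^*] since the antipode is an anti-coalgebra
   map.  Finally the image of [phi] is a Hopf subalgebra of [B^circ] containing [l_B^+]
   and [l_B^-], hence it contains [U(B)]. *)

From Pilot Require Import Defs.
From HB Require Import structures.
From mathcomp Require Import all_boot all_order all_algebra ring.
Import GRing.Theory.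
Set Implicit Arguments. Unset Strict Implicit. Unset Printing Implicit Defensive.
Local Open Scope ring_scope.

Ltac lin_sums := rewrite ?mulr_sumr -?big_split /=; apply: eq_bigr => ? _.

Section LinearFunctionals.
Variables (k : fieldType) (V : lmodType k).

Section OneFunctional.
Variable f : V -> k.
Hypothesis hf : lin_fun f.

Lemma lin_fun0 : f 0 = 0.
Proof.
have := hf 1 0 0; rewrite scaler0 addr0 mul1r => /(congr1 (fun t => t - f 0)).
by rewrite subrr addrK.
Qed.

Lemma lin_funD x y : f (x + y) = f x + f y.
Proof. by have := hf 1 x y; rewrite scale1r mul1r. Qed.

Lemma lin_funZ c x : f (c *: x) = c * f x.
Proof. by have := hf c x 0; rewrite addr0 lin_fun0 addr0. Qed.

Lemma lin_fun_sum I (s : seq I) (F : I -> V) :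
  f (\sum_(i <- s) F i) = \sum_(i <- s) f (F i).
Proof.
elim: s => [|i s IH]; first by rewrite !big_nil lin_fun0.
by rewrite !big_cons lin_funD IH.
Qed.

End OneFunctional.

Lemma bilin_lin (U : lmodType k) (f : U -> V -> k) :
  (forall y, lin_fun (f^~ y)) -> (forall x, lin_fun (f x)) -> bilin f.
Proof. by move=> hl hr; split=> *; [apply: hl | apply: hr]. Qed.

Lemma bilin_linl (U : lmodType k) (f : U -> V -> k) :
  bilin f -> forall y, lin_fun (f^~ y).
Proof. by case=> h _ y c x x'; apply: h. Qed.

Lemma bilin_linr (U : lmodType k) (f : U -> V -> k) :
  bilin f -> forall x, lin_fun (f x).
Proof. by case=> _ h x c y y'; apply: h. Qed.

Lemma trilin_lin (g : V -> V -> V -> k) :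
  (forall y z, lin_fun (fun x => g x y z)) -> (forall x z, lin_fun (fun y => g x y z)) ->
  (forall x y, lin_fun (g x y)) -> trilin g.
Proof.
by move=> h1 h2 h3; split=> *; [apply: h1 | split=> *; [apply: h2 | apply: h3]].
Qed.

Lemma trilin_mul (u v w : V -> k) : lin_fun u -> lin_fun v -> lin_fun w ->
  trilin (fun x y z => u x * v y * w z).
Proof. by move=> hu hv hw; apply: trilin_lin => ? ? ? ? ? /=; rewrite ?hu ?hv ?hw; ring. Qed.

End LinearFunctionals.

Lemma allP_map (T U : Type) (P : U -> Prop) (f : T -> U) (s : seq T) :
  (forall x, P (f x)) -> Defs.allP P (map f s).
Proof. by move=> hP; elim: s => //= x s ->; split. Qed.

Section HopfAlgebra.
Variables (k : fieldType) (A : algType k) (H : hopf A).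
Hypothesis hH : is_hopf H.
Local Notation D := (cop H).
Local Notation e := (eps H).
Local Notation S := (antip H).

Lemma tsum_pair (F : A * A -> k) s : tsum (fun u v => F (u, v)) s = \sum_(p <- s) F p.
Proof. by apply: eq_bigr => -[]. Qed.

Lemma sum_cop_lin (F : A * A -> k) : bilin (fun u v => F (u, v)) ->
  lin_fun (fun a => \sum_(p <- D a) F p).
Proof. by have [h _] := hH => hF c a a'; rewrite -!tsum_pair; apply: h. Qed.

Lemma coassoc (g : A -> A -> A -> k) : trilin g -> forall a,
  \sum_(p <- D a) \sum_(q <- D p.1) g q.1 q.2 p.2 =
  \sum_(p <- D a) \sum_(q <- D p.2) g p.1 q.1 q.2.
Proof. by have [_ [h _]] := hH; exact: h. Qed.

Lemma cop_counitl a : \sum_(p <- D a) e p.1 *: p.2 = a.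
Proof. by have [_ [_ [h _]]] := hH; exact: h. Qed.

Lemma cop_counitr a : \sum_(p <- D a) e p.2 *: p.1 = a.
Proof. by have [_ [_ [_ [h _]]]] := hH; exact: h. Qed.

Lemma eps_lin : lin_fun e.
Proof. by have [_ [_ [_ [_ [h _]]]]] := hH; exact: h. Qed.

Lemma eps_mul a b : e (a * b) = e a * e b.
Proof. by have [_ [_ [_ [_ [_ [h _]]]]]] := hH; exact: h. Qed.

Lemma eps1 : e 1 = 1.
Proof. by have [_ [_ [_ [_ [_ [_ [h _]]]]]]] := hH; exact: h. Qed.

Lemma sum_cop_mul (F : A * A -> k) : bilin (fun u v => F (u, v)) -> forall a b,
  \sum_(p <- D (a * b)) F p =
  \sum_(p <- D a) \sum_(q <- D b) F (p.1 * q.1, p.2 * q.2).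
Proof.
by have [_ [_ [_ [_ [_ [_ [_ [h _]]]]]]]] := hH => hF a b; rewrite -tsum_pair h.
Qed.

Lemma sum_cop1 (F : A * A -> k) : bilin (fun u v => F (u, v)) ->
  \sum_(p <- D 1) F p = F (1, 1).
Proof.
by have [_ [_ [_ [_ [_ [_ [_ [_ [h _]]]]]]]]] := hH => hF; rewrite -tsum_pair h.
Qed.

Lemma antip_lin c a b : S (c *: a + b) = c *: S a + S b.
Proof. by have [_ [_ [_ [_ [_ [_ [_ [_ [_ [h _]]]]]]]]]] := hH; exact: h. Qed.

Lemma antipl a : \sum_(p <- D a) S p.1 * p.2 = (e a)%:A.
Proof. by have [_ [_ [_ [_ [_ [_ [_ [_ [_ [_ [h _]]]]]]]]]]] := hH; exact: h. Qed.

Lemma antipr a : \sum_(p <- D a) p.1 * S p.2 = (e a)%:A.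
Proof. by have [_ [_ [_ [_ [_ [_ [_ [_ [_ [_ [_ h]]]]]]]]]]] := hH; exact: h. Qed.

Lemma sum_cop_scalar (F : A * A -> k) : bilin (fun u v => F (u, v)) -> forall c,
  \sum_(p <- D c%:A) F p = c * F (1, 1).
Proof.
move=> hF c; have hs := sum_cop_lin hF.
by rewrite -[c%:A]addr0 hs (lin_fun0 hs) addr0 (sum_cop1 hF).
Qed.

Section CounitLinear.
Variable f : A -> k.
Hypothesis hf : lin_fun f.

Lemma counitl_lin a : \sum_(p <- D a) e p.1 * f p.2 = f a.
Proof.
by rewrite -{2}(cop_counitl a) (lin_fun_sum hf); under [RHS]eq_bigr do rewrite (lin_funZ hf).
Qed.

Lemma counitr_lin a : \sum_(p <- D a) e p.2 * f p.1 = f a.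
Proof.
by rewrite -{2}(cop_counitr a) (lin_fun_sum hf); under [RHS]eq_bigr do rewrite (lin_funZ hf).
Qed.

End CounitLinear.

Lemma eps_antip a : e (S a) = e a.
Proof.
have hSe : lin_fun (fun x => e (S x)) by move=> c x y; rewrite antip_lin eps_lin.
have := congr1 e (antipl a).
rewrite (lin_fun_sum eps_lin) (lin_funZ eps_lin) eps1 mulr1 => <-.
by rewrite -(counitr_lin hSe); apply: eq_bigr => p _; rewrite eps_mul mulrC.
Qed.

Lemma eq_conv f f' g g' : f =1 f' -> g =1 g' -> conv H f g =1 conv H f' g'.
Proof. by move=> ef eg a; apply: eq_bigr => p _; rewrite ef eg. Qed.

Lemma conv_epsr f : lin_fun f -> conv H f e =1 f.
Proof.
by move=> hf a; rewrite -[RHS](counitr_lin hf); apply: eq_bigr => p _; rewrite mulrC.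
Qed.

Lemma convA f g h : lin_fun f -> lin_fun g -> lin_fun h ->
  conv H (conv H f g) h =1 conv H f (conv H g h).
Proof.
move=> hf hg hh a; have /= E := coassoc (trilin_mul hf hg hh) a.
rewrite /conv; under eq_bigr do rewrite mulr_suml; rewrite E.
by apply: eq_bigr => p _; rewrite mulr_sumr; apply: eq_bigr => q _; rewrite mulrA.
Qed.

Lemma conv_idem_eps u v : lin_fun u -> lin_fun v ->
  conv H u u =1 u -> conv H u v =1 e -> u =1 e.
Proof.
move=> hu hv uu uv a.
rewrite -(conv_epsr hu a) -(eq_conv (frefl u) uv a) -convA // -(uv a).
exact: eq_conv uu (frefl v) a.
Qed.

Definition bconv (F G : A -> A -> k) a b :=
  \sum_(p <- D a) \sum_(q <- D b) F p.1 q.1 * G p.2 q.2.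

Definition eps2 a b := e a * e b.

Lemma eq_bconv F F' G G' :
  (forall a b, F a b = F' a b) -> (forall a b, G a b = G' a b) ->
  forall a b, bconv F G a b = bconv F' G' a b.
Proof. by move=> eF eG a b; apply: eq_bigr => p _; apply: eq_bigr => q _; rewrite eF eG. Qed.

Lemma bconv_eps2 F : bilin F -> forall a b, bconv F eps2 a b = F a b.
Proof.
move=> hF a b; rewrite -(counitr_lin (bilin_linl hF b)); apply: eq_bigr => p _ /=.
rewrite -(counitr_lin (bilin_linr hF p.1)) mulr_sumr; apply: eq_bigr => q _ /=.
by rewrite /eps2; ring.
Qed.

Lemma eps2_bconv F : bilin F -> forall a b, bconv eps2 F a b = F a b.
Proof.
move=> hF a b; rewrite -(counitl_lin (bilin_linl hF b)); apply: eq_bigr => p _ /=.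
rewrite -(counitl_lin (bilin_linr hF p.2)) mulr_sumr; apply: eq_bigr => q _ /=.
by rewrite /eps2; ring.
Qed.

Lemma bconvA F G K : bilin F -> bilin G -> bilin K ->
  forall a b, bconv (bconv F G) K a b = bconv F (bconv G K) a b.
Proof.
move=> [hFl hFr] [hGl hGr] [hKl hKr] a b.
pose g x y z := \sum_(q <- D b) \sum_(t <- D q.1) F x t.1 * G y t.2 * K z q.2.
have g_tri : trilin g.
  by apply: trilin_lin => [y z|x z|x y] c u u' /=; lin_sums; lin_sums;
    rewrite ?hFl ?hGl ?hKl; ring.
transitivity (\sum_(p <- D a) \sum_(r <- D p.1) g r.1 r.2 p.2).
  apply: eq_bigr => p _; under eq_bigr do rewrite mulr_suml; rewrite exchange_big.
  by apply: eq_bigr => r _; apply: eq_bigr => q _; rewrite mulr_suml.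
rewrite coassoc //; apply: eq_bigr => p _.
have /= E r := coassoc (trilin_mul (bilin_linr (conj hFl hFr) p.1)
  (bilin_linr (conj hGl hGr) r.1) (bilin_linr (conj hKl hKr) r.2)) b.
under eq_bigr do rewrite /g E; rewrite exchange_big; apply: eq_bigr => q _ /=.
rewrite /bconv mulr_sumr; apply: eq_bigr => r _; rewrite mulr_sumr.
by apply: eq_bigr => t _; rewrite mulrA.
Qed.

Section AntipodeCop.
Variable f : A -> A -> k.
Hypothesis hf : bilin f.
Let hfl := proj1 hf.
Let hfr := proj2 hf.

(* [f] paired with [Delta (S x) * Delta y * (S (x) S) (Delta^op z)]: since [Delta o S] is a
   left and [(S (x) S) o Delta^op] a right convolution inverse of [Delta], coassociativity
   collapses [tri] to either side of [antip_cop]. *)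
Let tri x y z := \sum_(q <- D (S x)) \sum_(r <- D y) \sum_(t <- D z)
  f (q.1 * r.1 * S t.2) (q.2 * r.2 * S t.1).

Let tri_trilin : trilin tri.
Proof.
apply: trilin_lin => [y z|x z|x y] c u u'; rewrite /tri.
- rewrite antip_lin; apply: sum_cop_lin.
  apply: bilin_lin => [v|w] c' w1 w2 /=; lin_sums; lin_sums;
    by rewrite !mulrDl -!scalerAl ?hfl ?hfr.
- lin_sums; apply: sum_cop_lin.
  apply: bilin_lin => [v|w] c' w1 w2 /=; lin_sums;
    by rewrite mulrDr mulrDl -scalerAr -scalerAl ?hfl ?hfr.
- lin_sums; lin_sums; apply: sum_cop_lin.
  apply: bilin_lin => [v|w] c' w1 w2 /=;
    by rewrite antip_lin mulrDr -scalerAr ?hfl ?hfr.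
Qed.

Let tri_coassoc_left a :
  \sum_(p <- D a) \sum_(s <- D p.1) tri s.1 s.2 p.2 =
  \sum_(p <- D a) f (S p.2) (S p.1).
Proof.
have hR : lin_fun (fun a => \sum_(p <- D a) f (S p.2) (S p.1)).
  apply: (sum_cop_lin (F := fun p => f (S p.2) (S p.1))).
  by apply: bilin_lin => [v|w] c w1 w2 /=; rewrite antip_lin ?hfl ?hfr.
rewrite -(counitl_lin hR); apply: eq_bigr => p _.
pose h (w : A * A) := \sum_(t <- D p.2) f (w.1 * S t.2) (w.2 * S t.1).
have hb : bilin (fun u v => h (u, v)).
  apply: bilin_lin => [v|w] c w1 w2; rewrite /h /=; lin_sums;
    by rewrite mulrDl -scalerAl ?hfl ?hfr.
transitivity (\sum_(s <- D p.1) \sum_(w <- D (S s.1 * s.2)) h w).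
  by apply: eq_bigr => s _; rewrite (sum_cop_mul hb).
rewrite -(lin_fun_sum (sum_cop_lin hb)) antipl (sum_cop_scalar hb) /h.
by congr (_ * _); apply: eq_bigr => t _; rewrite !mul1r.
Qed.

Let antipr_collapse y x c :
  \sum_(r <- D c) \sum_(t <- D r.1) f (y * S r.2) (x * t.1 * S t.2) = f (y * S c) x.
Proof.
have hl : lin_fun (fun w => f (y * S w) x).
  by move=> *; rewrite antip_lin mulrDr -scalerAr hfl.
rewrite -(counitl_lin hl); apply: eq_bigr => r _ /=.
have lf := bilin_linr hf (y * S r.2).
rewrite -(lin_funZ lf) -mulr_algr -antipr mulr_sumr (lin_fun_sum lf).
by apply: eq_bigr => t _; rewrite mulrA.
Qed.

Let tri_inner x1 x2 c : \sum_(s <- D c) \sum_(r <- D s.1) \sum_(t <- D s.2)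
  f (x1 * r.1 * S t.2) (x2 * r.2 * S t.1) = e c * f x1 x2.
Proof.
pose g1 u v z := \sum_(t <- D z) f (x1 * u * S t.2) (x2 * v * S t.1).
have g1_tri : trilin g1.
  apply: trilin_lin => [v z|u z|u v] c' w1 w2; rewrite /g1.
  - by lin_sums; rewrite mulrDr mulrDl -scalerAr -scalerAl hfl.
  - by lin_sums; rewrite mulrDr mulrDl -scalerAr -scalerAl hfr.
  - apply: sum_cop_lin; apply: bilin_lin => [w|w] c'' u1 u2 /=;
      by rewrite antip_lin mulrDr -scalerAr ?hfl ?hfr.
have /= -> := coassoc g1_tri c.
transitivity (\sum_(s <- D c) f (x1 * s.1 * S s.2) x2).
  apply: eq_bigr => s _; rewrite -antipr_collapse.
  pose g2 u v w := f (x1 * s.1 * S w) (x2 * u * S v).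
  have g2_tri : trilin g2.
    apply: trilin_lin => [v w|u w|u v] c' w1 w2; rewrite /g2.
    - by rewrite mulrDr mulrDl -scalerAr -scalerAl hfr.
    - by rewrite antip_lin mulrDr -scalerAr hfr.
    - by rewrite antip_lin mulrDr -scalerAr hfl.
  by have /= <- := coassoc g2_tri s.2.
have hl : lin_fun (fun w => f (x1 * w) x2) by move=> *; rewrite mulrDr -scalerAr hfl.
under eq_bigr do rewrite -mulrA.
by rewrite -(lin_fun_sum hl) /= antipr mulr_algr (lin_funZ (bilin_linl hf x2)).
Qed.

Let tri_coassoc_right a :
  \sum_(p <- D a) \sum_(s <- D p.2) tri p.1 s.1 s.2 =
  \sum_(q <- D (S a)) f q.1 q.2.
Proof.
have hL : lin_fun (fun a => \sum_(q <- D (S a)) f q.1 q.2).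
  by move=> c x y; rewrite antip_lin (sum_cop_lin (F := fun q => f q.1 q.2)).
rewrite -(counitr_lin hL); apply: eq_bigr => p _.
rewrite /tri exchange_big mulr_sumr; apply: eq_bigr => q _.
exact: tri_inner.
Qed.

Lemma antip_cop a :
  \sum_(q <- D (S a)) f q.1 q.2 = \sum_(p <- D a) f (S p.2) (S p.1).
Proof. by rewrite -tri_coassoc_right -tri_coassoc_left (coassoc tri_trilin). Qed.

End AntipodeCop.

Section Braiding.
Variable br : A -> A -> k.
Hypothesis hbr : braiding H br.
Let br_bilin : bilin br := proj1 hbr.
Let brl := proj1 br_bilin.
Let brr := proj2 br_bilin.

Let br_mulr a b c : br a (b * c) = \sum_(p <- D a) br p.1 b * br p.2 c.
Proof. by have [_ [_ [_ [h _]]]] := hbr; exact: h. Qed.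

Let br_mull a b c : br (a * b) c = \sum_(p <- D c) br b p.1 * br a p.2.
Proof. by have [_ [_ [_ [_ h]]]] := hbr; exact: h. Qed.

Lemma br_r1 a : br a 1 = e a.
Proof.
have [_ [_ [[br' [[hl' hr'] hinv]] _]]] := hbr.
apply: (@conv_idem_eps (fun x => br x 1) (fun x => br' x 1)) => [c x y|c x y|x|x] /=.
- by rewrite brl.
- by rewrite hl'.
- by rewrite /conv -br_mulr mulr1.
have [+ _] := hinv x 1; rewrite eps1 mulr1 => <-.
apply: eq_bigr => p _; rewrite (sum_cop1 (F := fun q => br p.1 q.1 * br' p.2 q.2)) //.
by apply: bilin_lin => ? ? ? ? /=; rewrite ?brr ?hr'; ring.
Qed.

Lemma br_1l b : br 1 b = e b.
Proof.
have [_ [_ [[br' [[hl' hr'] hinv]] _]]] := hbr.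
apply: (@conv_idem_eps (br 1) (br' 1)) => [c x y|c x y|x|x] /=.
- by rewrite brr.
- by rewrite hr'.
- by rewrite /conv -br_mull mulr1.
have [+ _] := hinv 1 x; rewrite eps1 mul1r => <-.
rewrite (sum_cop1 (F := fun p => \sum_(q <- D x) br p.1 q.1 * br' p.2 q.2)) //.
by apply: bilin_lin => ? ? ? ? /=; lin_sums; rewrite ?brl ?hl'; ring.
Qed.

Lemma bconv_br_antipr a b : bconv (fun x y => br x (S y)) br a b = eps2 a b.
Proof.
rewrite /bconv exchange_big /=.
transitivity (\sum_(q <- D b) br a (S q.1 * q.2)).
  by apply: eq_bigr => q _; rewrite br_mulr.
have lb := bilin_linr br_bilin a.
by rewrite -(lin_fun_sum lb) antipl (lin_funZ lb) br_r1 mulrC.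
Qed.

Lemma bconv_br_antip a b :
  bconv (fun x y => br (S x) (S y)) (fun x y => br x (S y)) a b = eps2 a b.
Proof.
transitivity (\sum_(p <- D a) br (S p.1 * p.2) (S b)).
  apply: eq_bigr => p _; rewrite br_mull.
  have hfp : bilin (fun x y => br p.2 x * br (S p.1) y).
    by apply: bilin_lin => ? ? ? ? /=; rewrite ?brl ?brr; ring.
  by rewrite (antip_cop hfp); apply: eq_bigr => q _; rewrite mulrC.
have lb := bilin_linl br_bilin (S b).
by rewrite -(lin_fun_sum lb) antipl (lin_funZ lb) /= br_1l eps_antip.
Qed.

(* [G := br _ (S _)] is a left convolution inverse of [br] and [F := br (S _) (S _)] one of [G],
   so [F = F * (G * br) = (F * G) * br = br]. *)
Lemma braiding_antip a b : br (S a) (S b) = br a b.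
Proof.
have bF : bilin (fun x y => br (S x) (S y)).
  by apply: bilin_lin => ? ? ? ? /=; rewrite antip_lin ?brl ?brr.
have bG : bilin (fun x y => br x (S y)).
  by apply: bilin_lin => ? ? ? ? /=; rewrite ?antip_lin ?brl ?brr.
rewrite -(bconv_eps2 bF) -(eq_bconv (fun _ _ => erefl) bconv_br_antipr).
by rewrite -bconvA // (eq_bconv bconv_br_antip (fun _ _ => erefl)) eps2_bconv.
Qed.

End Braiding.

End HopfAlgebra.

Section Transpose.
Variables (k : fieldType) (A B : algType k) (HA : hopf A) (HB : hopf B).
Variable iota : B -> A -> k.
Hypothesis hiota : hopf_map HB HA iota.

Lemma transpose_resdual a : resdual HB (fun x => iota x a).
Proof.
have [_ [ilin [imul _]]] := hiota.
split; first by move=> c x y; rewrite ilin.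
exists (map (fun p => (fun x => iota x p.1, fun x => iota x p.2)) (cop HA a)); split.
  by apply: allP_map => p; split=> c x y /=; rewrite ilin.
by move=> x y; rewrite big_map imul.
Qed.

Lemma transpose_hopf_map : hopf_map HA HB (fun a x => iota x a).
Proof.
have [ires [ilin [imul [i1 [icop [ieps iS]]]]]] := hiota.
split; first exact: transpose_resdual.
split; first by move=> c a b x; rewrite (proj1 (ires x)).
split; first by move=> a b x; rewrite icop.
split; first by move=> x; rewrite ieps.
split; first by move=> a x y; rewrite imul.
split; first by move=> a; rewrite i1.
by move=> a x; rewrite iS.
Qed.

Lemma transpose_image_hopf_subalg :
  hopf_subalg_pred HB (fun G => exists a, (fun x => iota x a) =1 G).
Proof.
have [ires [_ [imul [_ [icop [ieps iS]]]]]] := hiota.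
split.
  move=> G [a ha]; have [hl [t [ht hm]]] := transpose_resdual a.
  split; first by move=> c x y; rewrite -!ha hl.
  by exists t; split=> // x y; rewrite -ha hm.
split; first by move=> G G' [a ha] eG; exists a => x; rewrite ha eG.
split.
  move=> c G G' [a ha] [b hb]; exists (c *: a + b) => x.
  by rewrite -ha -hb (proj1 (ires x)).
split; first by exists 1 => x; rewrite ieps.
split.
  move=> G G' [a ha] [b hb]; exists (a * b) => x.
  by rewrite icop; apply: eq_bigr => p _; rewrite -ha -hb.
split; first by move=> G [a ha]; exists (antip HA a) => x; rewrite -ha iS.
move=> G [a ha].
exists (map (fun p => (fun x => iota x p.1, fun x => iota x p.2)) (cop HA a)).
split; first by apply: allP_map => p; split; [exists p.1 | exists p.2].
by move=> x y; rewrite big_map -ha imul.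
Qed.

Section Braided.
Variables (brA : A -> A -> k) (brB : B -> B -> k).
Hypotheses (hA : is_hopf HA) (hbrA : braiding HA brA).
Hypothesis iota_U0 : forall x, in_U0 HA brA (iota x).
Hypothesis brB_restr : forall x y a b,
  iota x =1 lplus brA a -> iota y =1 lminus HA brA b -> brB x y = brA a (antip HA b).

Lemma transpose_lplus a x :
  iota x =1 lplus brA a -> (fun y => iota y a) =1 lplus brB x.
Proof. by move=> hx y; have [_ [b hb]] := iota_U0 y; rewrite /lplus (brB_restr hx hb) hb. Qed.

Lemma transpose_lminus a x :
  iota x =1 lminus HA brA a -> (fun y => iota y a) =1 lminus HB brB x.
Proof.
have [_ [_ [_ [_ [_ [_ iS]]]]]] := hiota.
move=> hx y; have [[b hb] _] := iota_U0 y; have [_ [c hc]] := iota_U0 (antip HB x).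
rewrite /lminus (brB_restr hb hc) hb /lplus.
by have := hc b; rewrite iS hx /lminus (braiding_antip hA hbrA) => <-.
Qed.

End Braided.
End Transpose.

Theorem theorem2 (k : fieldType)
  (A : algType k) (HA : hopf A) (brA : A -> A -> k)
  (B : algType k) (HB : hopf B) (brB : B -> B -> k)
  (iota : B -> A -> k) :
  is_hopf HA -> braiding HA brA ->
  (* B is a Hopf subalgebra of U_0(A): an injective Hopf map into A^circ
     with image inside U_0(A) *)
  is_hopf HB -> hopf_map HB HA iota ->
  (forall x y, iota x =1 iota y -> x = y) ->
  (forall x, in_U0 HA brA (iota x)) ->
  (* B is braided by the restriction of (l^+(a) | l^-(b)) = <a | S b> *)
  braiding HB brB ->
  (forall x y a b, iota x =1 lplus brA a -> iota y =1 lminus HA brA b ->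
     brB x y = brA a (antip HA b)) ->
  let phi := fun (a : A) (x : B) => iota x a in
  hopf_map HA HB phi /\
  (forall a x, iota x =1 lplus brA a -> phi a =1 lplus brB x) /\
  (forall a x, iota x =1 lminus HA brA a -> phi a =1 lminus HB brB x) /\
  (forall F : B -> k, in_U HB brB F -> exists a, phi a =1 F).
Proof.
move=> hA hbrA _ hiota _ U0 _ restr phi.
have phi_lplus := transpose_lplus U0 restr.
have phi_lminus := transpose_lminus hiota hA hbrA U0 restr.
split; first exact: transpose_hopf_map hiota.
split; first exact: phi_lplus.
split; first exact: phi_lminus.
move=> F /(_ (fun G => exists a, phi a =1 G)); apply.
- exact: transpose_image_hopf_subalg hiota.
- by move=> x; have [[a ha] _] := U0 x; exists a; apply: phi_lplus.
- by move=> x; have [_ [a ha]] := U0 x; exists a; apply: phi_lminus.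
Qed.
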